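(* Let $N\ge1$, $W,N_0,P_A,P^{max}>0$ and for $i=1,\dots,N$ let $D_i,\zeta_i,h_i,g_i>0$. Consider the problem: minimize $\tau_0+\sum_{i=1}^N\tau_{S_i}$ over $\tau_0,\tau_{S_i},P_{S_i}\ge0$ subject to, for all $i$, $P_{S_i}\tau_{S_i}\le\zeta_iP_Ah_i\tau_0$, $\tau_{S_i}W\log_2\left(1+\frac{P_{S_i}g_i}{WN_0}\right)\ge D_i$, and $P_{S_i}\le P^{max}$. For each $i$ let $\gamma_i=\frac{g_i\zeta_iP_Ah_i}{WN_0}$, $\alpha_i=\mathbb{L}_0\!\left(\frac{\gamma_i-1}{e}\right)+1$ ($\mathbb{L}_0$ the principal Lambert W function), $\dot\tau_{S_i}=\frac{D_i\ln2}{W\alpha_i}$, $\dot\tau_0^i=\frac{D_i\ln2}{W\alpha_i\gamma_i}\left(2^{\alpha_i/\ln2}-1\right)$, $\ddot\tau_{S_i}=\frac{D_i}{W\log_2(1+P^{max}g_i/(WN_0))}$, $\ddot\tau_0^i=\frac{P^{max}\ddot\tau_{S_i}}{\zeta_iP_Ah_i}$, and set $\hat\tau_0^i=\dot\tau_0^i$ if $\zeta_iP_Ah_i\dot\tau_0^i/\dot\tau_{S_i}\le P^{max}$ and $\hat\tau_0^i=\ddot\tau_0^i$ otherwise. Then $\max_{i=1,\dots,N}\hat\tau_0^i$ is a lower bound on the optimal value of $\tau_0$ in this problem.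
   Context: Multiple source wireless powered network: all sources harvest energy from an AP of power $P_A$ during a common time $\tau_0$ (source $i$ harvests $\zeta_iP_Ah_i\tau_0$), then each source $i$ transmits $D_i$ bits in its own slot of length $\tau_{S_i}$ with power $P_{S_i}$ over an AWGN channel of gain $g_i$. $\hat\tau_0^i$ is the optimal energy harvesting time when source $i$ is alone in the network. *)

From HB Require Import structures.
From mathcomp Require Import all_boot all_order all_algebra.
From mathcomp Require Import all_classical all_reals all_analysis.
Set Implicit Arguments. Unset Strict Implicit. Unset Printing Implicit Defensive.
Import Order.TTheory GRing.Theory Num.Theory.
Local Open Scope ring_scope.
Local Open Scope classical_set_scope.

(* Principal branch L_0 of the Lambert W function: for x >= -1/e, the unique
   w >= -1 with w * e^w = x (chosen via xget; outside the domain the value is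
   an arbitrary default 0, never used here). *)
Definition lambertW0 {R : realType} (x : R) : R :=
  xget 0 [set w : R | -1 <= w /\ w * expR w = x].

Definition log2 {R : realType} (x : R) : R := ln x / ln 2.

Definition feasible {R : realType} (N : nat) (W N0 PA Pmax : R)
  (D zeta h g : 'I_N -> R) (tau0 : R) (tauS PS : 'I_N -> R) : Prop :=
  0 <= tau0 /\
  forall i, 0 <= tauS i /\ 0 <= PS i /\
    PS i * tauS i <= zeta i * PA * h i * tau0 /\
    D i <= tauS i * W * log2 (1 + PS i * g i / (W * N0)) /\
    PS i <= Pmax.

Definition objective {R : realType} (N : nat) (tau0 : R) (tauS : 'I_N -> R) : R :=
  tau0 + \sum_(i < N) tauS i.

Definition optimal {R : realType} (N : nat) (W N0 PA Pmax : R)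
  (D zeta h g : 'I_N -> R) (tau0 : R) (tauS PS : 'I_N -> R) : Prop :=
  feasible W N0 PA Pmax D zeta h g tau0 tauS PS /\
  forall t0 tS P, feasible W N0 PA Pmax D zeta h g t0 tS P ->
    objective tau0 tauS <= objective t0 tS.

Section Quantities.
Variables (R : realType) (W N0 PA Pmax Di zetai hi gi : R).
Definition gamma_i : R := gi * zetai * PA * hi / (W * N0).
Definition alpha_i : R := lambertW0 ((gamma_i - 1) / expR 1) + 1.
Definition tauS_dot : R := Di * ln 2 / (W * alpha_i).
Definition tau0_dot : R :=
  Di * ln 2 / (W * alpha_i * gamma_i) * (2 `^ (alpha_i / ln 2) - 1).
Definition tauS_ddot : R := Di / (W * log2 (1 + Pmax * gi / (W * N0))).
Definition tau0_ddot : R := Pmax * tauS_ddot / (zetai * PA * hi).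
Definition tau0_hat : R :=
  if zetai * PA * hi * tau0_dot / tauS_dot <= Pmax then tau0_dot else tau0_ddot.
End Quantities.

From HB Require Import structures.
From mathcomp Require Import all_boot all_order all_algebra.
From mathcomp Require Import all_classical all_reals all_analysis.
From mathcomp Require Import ring lra.
Import Order.TTheory GRing.Theory Num.Theory.
Local Open Scope ring_scope.
Set Implicit Arguments. Unset Strict Implicit.

(* Fix a source with harvesting efficiency c = zeta P_A h and K = W N_0.  At power p
   it needs a slot of at least tx(p) = D ln 2 / (W ln (1 + p g / K)), hence a
   harvesting time of at least eh(p) = p tx(p) / c.  By convexity of exp, eh is
   nondecreasing in p, while the total time eh(p) + tx(p) = (c + p) tx(p) / c strictly
   decreases up to the power where z ln z - z = g c / K - 1 for z = 1 + p g / K; the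
   Lambert W function solves this equation, and hat tau_0 is exactly eh(P0) for P0 the
   minimum of that power and P^max.  So a feasible schedule with tau_0 < eh(P0) must
   use a power p < P0 and spend strictly more total time on the source than
   (eh(P0), tx(P0)); substituting this pair into an optimal solution would keep it
   feasible and make it strictly better. *)

Section LnExpInequalities.
Import numFieldNormedType.Exports.
Variable R : realType.
Implicit Types a u w x y z : R.

Lemma lt_ln_tangent z y : 0 < z -> 0 < y -> z != y -> y * (ln z - ln y) < z - y.
Proof.
move=> z_gt0 y_gt0 zNy.
have zy_gt0 : 0 < z / y by exact: divr_gt0.
have ln_zy_neq0 : ln (z / y) != 0.
  by rewrite ln_eq0 //; apply: contra zNy => /eqP/divr1_eq ->.
have := expR_gt1Dx ln_zy_neq0.
rewrite lnK ?posrE // ln_div ?posrE // => lt_zy.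
have -> : z - y = y * (z / y - 1) by field; exact: lt0r_neq0.
by rewrite ltr_pM2l //; lra.
Qed.

Lemma le_ln_tangent z y : 0 < z -> 0 < y -> y * (ln z - ln y) <= z - y.
Proof.
move=> z_gt0 y_gt0; have [->|zNy] := eqVneq z y; first by rewrite !subrr mulr0.
exact/ltW/lt_ln_tangent.
Qed.

Lemma le_xlnxBx z y : 1 <= z -> z <= y -> z * ln z - z <= y * ln y - y.
Proof.
move=> z_ge1 zy.
have := le_ln_tangent (lt_le_trans ltr01 z_ge1) (lt_le_trans ltr01 (le_trans z_ge1 zy)).
have : 0 <= (y - z) * ln z by rewrite mulr_ge0 ?ln_ge0 ?subr_ge0.
lra.
Qed.

Lemma lt_affine_div_ln a z1 z2 : 1 < z1 -> z1 < z2 -> z2 * ln z2 - z2 <= a ->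
  (a + z2) * ln z1 < (a + z1) * ln z2.
Proof.
move=> z1_gt1 z12 ha.
have lnz1_gt0 := ln_gt0 z1_gt1.
have lnz12 : ln z1 < ln z2 by rewrite ltr_ln ?posrE //; lra.
have z2_gt0 : 0 < z2 by rewrite (lt_trans ltr01) ?(lt_trans z1_gt1).
have := lt_ln_tangent (lt_trans ltr01 z1_gt1) z2_gt0 (negbT (lt_eqF z12)).
nra.
Qed.

Lemma le_expR_slope u0 u : 0 < u0 -> u0 <= u -> u * (expR u0 - 1) <= u0 * (expR u - 1).
Proof.
move=> u0_gt0 u0u; have u_gt0 := lt_le_trans u0_gt0 u0u.
have t_ge0 : 0 <= u0 / u by rewrite divr_ge0 // ltW.
have t_le1 : u0 / u <= 1 by rewrite ler_pdivrMr // mul1r.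
have := convex_expR (Itv01 t_ge0 t_le1) u 0.
rewrite !convRE /= /unstable.onem mulr0 addr0 expR0 mulr1 divfK ?gt_eqF // => cvx.
have -> : u0 * (expR u - 1) = u * (u0 / u * expR u + (1 - u0 / u) - 1).
  by field; rewrite gt_eqF.
by rewrite ler_pM2l // lerD2r.
Qed.

Lemma le_subr1_div_ln z0 z : 1 < z0 -> z0 <= z -> (z0 - 1) * ln z <= (z - 1) * ln z0.
Proof.
move=> z0_gt1 z0z; have z_gt1 := lt_le_trans z0_gt1 z0z.
have ln_z0z : ln z0 <= ln z by rewrite ler_ln ?posrE //; lra.
have := le_expR_slope (ln_gt0 z0_gt1) ln_z0z.
by rewrite !lnK ?posrE //; lra.
Qed.

Lemma lambertW0P x : - expR (-1) < x ->
  -1 < lambertW0 x /\ lambertW0 x * expR (lambertW0 x) = x.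
Proof.
move=> x_gt.
pose f w : R := w * expR w.
have [w w_ge fw] : exists2 w, -1 <= w & f w = x.
  have f_cont : continuous f.
    by move=> w; apply: continuousM; [exact: cvg_id | exact: continuous_expR].
  have f_range : Num.min (f (-1)) (f `|x|) <= x <= Num.max (f (-1)) (f `|x|).
    rewrite ge_min le_max /f mulN1r (ltW x_gt) /=; apply/orP; right.
    apply: (le_trans (real_ler_norm (num_real x))).
    rewrite -[X in X <= _]mulr1 ler_wpM2l // (le_trans _ (expR_ge1Dx _)) //.
    by rewrite lerDl.
  have x_ge : -1 <= `|x| by rewrite (le_trans (lerN10 _)).
  have [c] := IVT x_ge (continuous_subspaceT f_cont) f_range.
  by rewrite in_itv /= => /andP[c_ge _] fc; exists c.
have W0_ex : exists w, [set w | -1 <= w /\ w * expR w = x]%classic w by exists w.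
have [W0_ge W0_spec] := xgetPex 0 W0_ex; rewrite -/(lambertW0 x) in W0_ge W0_spec.
split=> //; rewrite lt_neqAle W0_ge andbT; apply: contraTneq x_gt => W0_eq.
by rewrite -W0_spec -W0_eq mulN1r ltxx.
Qed.

Lemma powR_div_ln a x : 0 < a -> a != 1 -> a `^ (x / ln a) = expR x.
Proof. by move=> a_gt0 aN1; rewrite /powR gt_eqF // divfK // ln_eq0 // aN1. Qed.

End LnExpInequalities.

Section SingleSource.
Variables (R : realType) (W K c g D : R).
Hypotheses (W_gt0 : 0 < W) (K_gt0 : 0 < K) (c_gt0 : 0 < c) (g_gt0 : 0 < g)
  (D_gt0 : 0 < D).
Implicit Types p s t : R.

Definition snr p := 1 + p * g / K.
Definition tx_time p := D / (W * log2 (snr p)).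
Definition eh_time p := p * tx_time p / c.

Lemma snr_gt1 p : 0 < p -> 1 < snr p.
Proof. by move=> p_gt0; rewrite /snr ltrDl divr_gt0 ?mulr_gt0. Qed.

Lemma log2_snr_gt0 p : 0 < p -> 0 < log2 (snr p).
Proof. by move=> p_gt0; rewrite divr_gt0 ?ln_gt0 ?snr_gt1 ?ltr1n. Qed.

Lemma tx_time_gt0 p : 0 < p -> 0 < tx_time p.
Proof. by move=> p_gt0; rewrite divr_gt0 // mulr_gt0 // log2_snr_gt0. Qed.

Lemma tx_timeE p : 0 < p -> tx_time p * W * log2 (snr p) = D.
Proof. by move=> p_gt0; rewrite -mulrA divfK // gt_eqF // mulr_gt0 // log2_snr_gt0. Qed.

Lemma eh_timeE p : c * eh_time p = p * tx_time p.
Proof. by rewrite mulrC divfK ?gt_eqF. Qed.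

Lemma tx_time_le p s : 0 <= p -> D <= s * W * log2 (snr p) -> 0 < p /\ tx_time p <= s.
Proof.
move=> p_ge0 rate; have p_gt0 : 0 < p.
  rewrite lt_neqAle p_ge0 andbT; apply: contraTneq rate => <-.
  by rewrite /snr !mul0r addr0 /log2 ln1 mul0r mulr0 -ltNge.
split=> //; rewrite ler_pdivrMr; first by rewrite -mulrA in rate.
by rewrite mulr_gt0 // log2_snr_gt0.
Qed.

Lemma tx_time_ln p : 0 < p -> tx_time p = D * ln 2 / (W * ln (snr p)).
Proof.
move=> p_gt0; rewrite /tx_time /log2; field.
by rewrite !gt_eqF ?ln_gt0 ?snr_gt1 ?ltr1n.
Qed.

Lemma eh_time_ln p : 0 < p -> eh_time p = D * ln 2 / (W * c) * (p / ln (snr p)).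
Proof.
move=> p_gt0; rewrite /eh_time tx_time_ln //; field.
by rewrite !gt_eqF ?ln_gt0 ?snr_gt1.
Qed.

Lemma total_time_ln p : 0 < p ->
  eh_time p + tx_time p = D * ln 2 / (W * c) * ((c + p) / ln (snr p)).
Proof.
move=> p_gt0; rewrite /eh_time tx_time_ln //; field.
by rewrite !gt_eqF ?ln_gt0 ?snr_gt1.
Qed.

Lemma ler_snr : {mono snr : p0 p / p0 <= p}.
Proof. by move=> p0 p; rewrite lerD2l ler_pM2r ?invr_gt0 // ler_pM2r. Qed.

Lemma ltr_snr : {mono snr : p0 p / p0 < p}.
Proof. by move=> p0 p; rewrite ltrD2l ltr_pM2r ?invr_gt0 // ltr_pM2r. Qed.

Lemma snrB1 p : snr p - 1 = p * (g / K).
Proof. by rewrite /snr addrAC subrr add0r mulrA. Qed.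

Lemma eh_time_nondecreasing p0 p : 0 < p0 -> p0 <= p -> eh_time p0 <= eh_time p.
Proof.
move=> p0_gt0 p0p; have p_gt0 := lt_le_trans p0_gt0 p0p.
have lnz0_gt0 := ln_gt0 (snr_gt1 p0_gt0); have lnz_gt0 := ln_gt0 (snr_gt1 p_gt0).
have z0z : snr p0 <= snr p by rewrite ler_snr.
have := le_subr1_div_ln (snr_gt1 p0_gt0) z0z.
rewrite !snrB1 mulrAC [X in _ <= X]mulrAC ler_pM2r ?divr_gt0 // => cross.
rewrite !eh_time_ln // ler_pM2l ?divr_gt0 ?mulr_gt0 ?ln_gt0 ?ltr1n //.
by rewrite ler_pdivrMr // mulrAC ler_pdivlMr.
Qed.

Lemma total_time_decreasing p P0 : 0 < p -> p < P0 ->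
  snr P0 * ln (snr P0) - snr P0 <= g * c / K - 1 ->
  eh_time P0 + tx_time P0 < eh_time p + tx_time p.
Proof.
move=> p_gt0 pP0 P0_opt; have P0_gt0 := lt_trans p_gt0 pP0.
have lnz_gt0 := ln_gt0 (snr_gt1 p_gt0); have lnz0_gt0 := ln_gt0 (snr_gt1 P0_gt0).
have affine_snr q : g * c / K - 1 + snr q = g / K * (c + q) by rewrite /snr; ring.
have zz0 : snr p < snr P0 by rewrite ltr_snr.
have := lt_affine_div_ln (snr_gt1 p_gt0) zz0 P0_opt.
rewrite !affine_snr -!mulrA !ltr_pM2l ?invr_gt0 // => cross.
rewrite !total_time_ln // ltr_pM2l ?divr_gt0 ?mulr_gt0 ?ln_gt0 ?ltr1n //.
by rewrite ltr_pdivrMr // mulrAC ltr_pdivlMr.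
Qed.

Lemma source_time_lower_bound P0 t s p : 0 < P0 ->
  snr P0 * ln (snr P0) - snr P0 <= g * c / K - 1 ->
  0 <= p -> p * s <= c * t -> D <= s * W * log2 (snr p) ->
  t < eh_time P0 -> eh_time P0 + tx_time P0 < t + s.
Proof.
move=> P0_gt0 P0_opt p_ge0 energy rate t_lt.
have [p_gt0 tx_le] := tx_time_le p_ge0 rate.
have eh_le : eh_time p <= t.
  rewrite /eh_time ler_pdivrMr // [t * c]mulrC (le_trans _ energy) //.
  by rewrite ler_wpM2l // ltW.
have [P0p | pP0] := leP P0 p.
  by have := eh_time_nondecreasing P0_gt0 P0p; lra.
by have := total_time_decreasing p_gt0 pP0 P0_opt; lra.
Qed.

End SingleSource.

Section OptimalHarvestTime.
Variables (R : realType) (W N0 PA Pmax D zeta h g : R).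
Hypotheses (W_gt0 : 0 < W) (N0_gt0 : 0 < N0) (PA_gt0 : 0 < PA) (Pmax_gt0 : 0 < Pmax)
  (D_gt0 : 0 < D) (zeta_gt0 : 0 < zeta) (h_gt0 : 0 < h) (g_gt0 : 0 < g).

Local Notation K := (W * N0).
Local Notation c := (zeta * PA * h).
Local Notation gamma := (gamma_i W N0 PA zeta h g).
Local Notation alpha := (alpha_i W N0 PA zeta h g).

Let K_gt0 : 0 < K. Proof. exact: mulr_gt0. Qed.
Let c_gt0 : 0 < c. Proof. by rewrite !mulr_gt0. Qed.

Lemma gamma_iE : gamma = g * c / K.
Proof. by rewrite /gamma_i !mulrA. Qed.

Lemma alpha_iP : 0 < alpha /\ expR alpha * (alpha - 1) = gamma - 1.
Proof.
have gamma_gt0 : 0 < gamma by rewrite gamma_iE !divr_gt0 ?mulr_gt0.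
have x_gt : - expR (-1) < (gamma - 1) / expR 1.
  have : 0 < gamma / expR 1 by rewrite divr_gt0 ?expR_gt0.
  by rewrite expRN mulrBl mul1r; lra.
have [W0_gt W0_spec] := lambertW0P x_gt.
split; first by rewrite /alpha_i; lra.
by rewrite /alpha_i addrK expRD mulrC mulrA W0_spec divfK // gt_eqF ?expR_gt0.
Qed.

Definition opt_power := (expR alpha - 1) * K / g.

Lemma opt_power_gt0 : 0 < opt_power.
Proof.
by rewrite !divr_gt0 ?mulr_gt0 // subr_gt0 expR_gt1; case: alpha_iP.
Qed.

Lemma snr_opt_power : snr K g opt_power = expR alpha.
Proof. by rewrite /snr /opt_power; field; rewrite !gt_eqF. Qed.

Lemma tauS_dotE : tauS_dot W N0 PA D zeta h g = tx_time W K g D opt_power.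
Proof. by rewrite tx_time_ln ?opt_power_gt0 // snr_opt_power expRK. Qed.

Lemma tau0_dotE : tau0_dot W N0 PA D zeta h g = eh_time W K c g D opt_power.
Proof.
rewrite eh_time_ln ?opt_power_gt0 // snr_opt_power expRK /tau0_dot.
rewrite powR_div_ln ?ltr0n ?pnatr_eq1 // gamma_iE /opt_power.
have [alpha_gt0 _] := alpha_iP.
by field; rewrite !gt_eqF.
Qed.

Lemma tau0_hatE :
  tau0_hat W N0 PA Pmax D zeta h g = eh_time W K c g D (Num.min opt_power Pmax).
Proof.
have opt_cond :
    c * tau0_dot W N0 PA D zeta h g / tauS_dot W N0 PA D zeta h g = opt_power.
  rewrite tau0_dotE tauS_dotE eh_timeE // mulfK //.
  by rewrite gt_eqF // tx_time_gt0 // opt_power_gt0.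
by rewrite /tau0_hat opt_cond; case: leP => _; [exact: tau0_dotE | ].
Qed.

Lemma min_opt_power_stationary (P0 := Num.min opt_power Pmax) :
  snr K g P0 * ln (snr K g P0) - snr K g P0 <= g * c / K - 1.
Proof.
have [alpha_gt0 alpha_eq] := alpha_iP.
rewrite -gamma_iE -alpha_eq -{2}[alpha]expRK mulrBr mulr1.
apply: le_xlnxBx; first by rewrite ltW // snr_gt1 // lt_min opt_power_gt0.
by rewrite -snr_opt_power ler_snr // ge_min lexx.
Qed.
End OptimalHarvestTime.

Lemma optimal_le_source_update (R : realType) (N : nat) (W N0 PA Pmax : R)
    (D zeta h g : 'I_N -> R) (tau0 : R) (tauS PS : 'I_N -> R) (i : 'I_N) (t s p : R) :
  (forall j, 0 <= zeta j * PA * h j) ->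
  optimal W N0 PA Pmax D zeta h g tau0 tauS PS ->
  tau0 <= t -> 0 <= s -> 0 <= p -> p * s <= zeta i * PA * h i * t ->
  D i <= s * W * log2 (1 + p * g i / (W * N0)) -> p <= Pmax ->
  tau0 + tauS i <= t + s.
Proof.
move=> c_ge0 [[tau0_ge0 feas] opt] tau0_le s_ge0 p_ge0 energy rate p_le.
pose tauS' j := if j == i then s else tauS j.
pose PS' j := if j == i then p else PS j.
have feas' : feasible W N0 PA Pmax D zeta h g t tauS' PS'.
  split=> [|j]; first exact: le_trans tau0_ge0 tau0_le.
  rewrite /tauS' /PS'; case: eqP => [-> // | _].
  have [? [? [energy_j ?]]] := feas j.
  by do 3 split=> //; apply: le_trans energy_j _; rewrite ler_wpM2l.
have others : \sum_(j < N | j != i) tauS' j = \sum_(j < N | j != i) tauS j.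
  by apply: eq_bigr => j /negbTE; rewrite /tauS' => ->.
have := opt _ _ _ feas'.
rewrite /objective (bigD1 i) // [in X in _ <= X](bigD1 i) //= others /tauS' eqxx.
lra.
Qed.

Theorem lemma4 (R : realType) (N : nat) (W N0 PA Pmax : R)
  (D zeta h g : 'I_N -> R)
  (hN : (1 <= N)%N) (hW : 0 < W) (hN0 : 0 < N0) (hPA : 0 < PA) (hPmax : 0 < Pmax)
  (hD : forall i, 0 < D i) (hzeta : forall i, 0 < zeta i)
  (hh : forall i, 0 < h i) (hg : forall i, 0 < g i)
  (tau0 : R) (tauS PS : 'I_N -> R) :
  optimal W N0 PA Pmax D zeta h g tau0 tauS PS ->
  \big[Num.max/0]_(i < N) tau0_hat W N0 PA Pmax (D i) (zeta i) (h i) (g i) <= tau0.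
Proof.
move=> opt_tau; have [[tau0_ge0 feas] _] := opt_tau.
have K_gt0 : 0 < W * N0 := mulr_gt0 hW hN0.
have c_gt0 j : 0 < zeta j * PA * h j by rewrite !mulr_gt0.
apply: (big_ind (fun x => x <= tau0)) => // [x y x_le y_le | i _].
  by rewrite ge_max x_le y_le.
set P0 := Num.min (opt_power W N0 PA (zeta i) (h i) (g i)) Pmax.
have P0_gt0 : 0 < P0 by rewrite lt_min hPmax opt_power_gt0.
have P0_opt := min_opt_power_stationary hW hN0 hPA hPmax (hzeta i) (hh i) (hg i).
rewrite (tau0_hatE _ hW hN0 hPA (hD i)) // -/P0 leNgt; apply/negP => tau0_lt.
have [_ [p_ge0 [energy [rate _]]]] := feas i.
have := source_time_lower_bound hW K_gt0 (c_gt0 i) (hg i) (hD i) P0_gt0 P0_opt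
  p_ge0 energy rate tau0_lt.
have tx_gt0 := tx_time_gt0 hW K_gt0 (hg i) (hD i) P0_gt0.
have := optimal_le_source_update (i := i) (fun j => ltW (c_gt0 j)) opt_tau
  (ltW tau0_lt) (ltW tx_gt0) (ltW P0_gt0).
rewrite eh_timeE // tx_timeE // ge_min !lexx orbT => /(_ isT isT isT).
lra.
Qed.
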